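(* Let $f\in\mathcal A_C$, $n\in\mathbb N$, and let $g:\mathbb R\to\mathbb R$ be such that the pointwise derivatives $g^{(k)}$ exist at every point of $\mathbb R$ and $g^{(k)}\in AC(\overline{\mathbb R})$ for each $0\le k\le n$. Then $f*g\in C^n(\mathbb R)$ and $(f*g)^{(n)}(x)=f*g^{(n)}(x)$ for every $x\in\mathbb R$.
   Context: $AC(\overline{\mathbb R})$ denotes the functions on $\mathbb R$ that are absolutely continuous on each compact interval and of bounded variation on $\mathbb R$. $C^0(\overline{\mathbb R})$: continuous $F:\mathbb R\to\mathbb R$ with finite limits $F(\pm\infty)$; $\mathcal B_C=\{F\in C^0(\overline{\mathbb R}):F(-\infty)=0\}$; $\mathcal A_C=\{f\in\mathcal D'(\mathbb R): f=F'\text{ (distributional derivative) for some } F\in\mathcal B_C\}$, the primitive being unique. For $h\in\mathcal A_C$ with primitive $H$ and $g$ of bounded variation, $\int_{-\infty}^\infty hg=H(\infty)g(\infty)-\int_{-\infty}^\infty H\,dg$ (Henstock–Stieltjes). For $f\in\mathcal A_C$ with primitive $F$, $f(x-\cdot)$ is the element of $\mathcal A_C$ with primitive $y\mapsto F(\infty)-F(x-y)$, and for $g$ of bounded variation $f*g(x)=\int_{-\infty}^\infty f(x-y)g(y)\,dy$ is the product integral of $f(x-\cdot)$ and $g$. *)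

From Stdlib Require Import Reals Lra ClassicalEpsilon.
Open Scope R_scope.

Fixpoint fsum (n : nat) (u : nat -> R) : R :=
  match n with O => 0 | S m => fsum m u + u m end.

Definition lim_pinf (u : R -> R) (l : R) : Prop :=
  forall eps, eps > 0 -> exists M, forall y, y >= M -> Rabs (u y - l) < eps.
Definition lim_minf (u : R -> R) (l : R) : Prop :=
  forall eps, eps > 0 -> exists M, forall y, y <= M -> Rabs (u y - l) < eps.

(* chosen values u(+oo), u(-oo) (meaningful when the limit exists) *)
Definition at_pinf (u : R -> R) : R := epsilon (inhabits 0) (lim_pinf u).
Definition at_minf (u : R -> R) : R := epsilon (inhabits 0) (lim_minf u).

Definition bounded_variation (g : R -> R) : Prop :=
  exists V, forall (n : nat) (x : nat -> R),
    (forall i, (i < n)%nat -> x i <= x (S i)) ->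
    fsum n (fun i => Rabs (g (x (S i)) - g (x i))) <= V.

(* absolute continuity on the compact interval [a,b]: for non-overlapping
   subintervals (x(2i), x(2i+1)), i<n, listed in increasing order *)
Definition abs_cont_on (g : R -> R) (a b : R) : Prop :=
  forall eps, eps > 0 -> exists delta, delta > 0 /\
    forall (n : nat) (x : nat -> R),
      a <= x O -> x (2 * n)%nat <= b ->
      (forall j, (j < 2 * n)%nat -> x j <= x (S j)) ->
      fsum n (fun i => x (S (2 * i)) - x (2 * i)%nat) < delta ->
      fsum n (fun i => Rabs (g (x (S (2 * i))) - g (x (2 * i)%nat))) < eps.

Definition AC_bar (g : R -> R) : Prop :=
  (forall a b, a <= b -> abs_cont_on g a b) /\ bounded_variation g.

(* B_C : continuous, F(-oo) = 0, finite F(+oo).  An element f of A_C is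
   represented by its (unique) primitive F in B_C. *)
Definition B_C (F : R -> R) : Prop :=
  continuity F /\ lim_minf F 0 /\ exists l, lim_pinf F l.

Definition RS_integral_on (H g : R -> R) (a b I : R) : Prop :=
  forall eps, eps > 0 -> exists delta, delta > 0 /\
    forall (n : nat) (x t : nat -> R),
      x O = a -> x n = b ->
      (forall i, (i < n)%nat -> x i <= t i <= x (S i) /\ x (S i) - x i < delta) ->
      Rabs (fsum n (fun i => H (t i) * (g (x (S i)) - g (x i))) - I) < eps.

Definition RS_integral_R (H g : R -> R) (L : R) : Prop :=
  forall eps, eps > 0 -> exists M, forall a b, a <= - M -> M <= b ->
    exists I, RS_integral_on H g a b I /\ Rabs (I - L) < eps.

Definition RS_int_R (H g : R -> R) : R :=
  epsilon (inhabits 0) (RS_integral_R H g).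

(* f*g(x) for f = F' in A_C and g of bounded variation:
   f(x-.) has primitive H(y) = F(oo) - F(x-y), and
   f*g(x) = H(oo) g(oo) - int H dg. *)
Definition conv (F g : R -> R) (x : R) : R :=
  let H := fun y => at_pinf F - F (x - y) in
  at_pinf H * at_pinf g - RS_int_R H g.

(* With [g' = h], both of bounded variation and [h] continuous, [h] tends to 0 at
   infinity. Let [G] be an antiderivative of [F]. The increment of the convolution
   kernel, [F (x + s - y) - F (x - y)], is the [y]-derivative of
   [- (G (x + s - y) - G (x - y))]; shifted by the constant [s F (+oo)], this
   primitive differs from [s (F (+oo) - F (x - y))] by at most [|s|] times the
   oscillation of [F] on intervals of length [|s|]. Integrating by parts (the
   boundary terms vanish with [h]) therefore puts the difference quotient of [f * g]
   at [x] within that oscillation times the variation of [h] of [f * h (x)]; [F]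
   being uniformly continuous, [(f * g)' = f * h]. Continuity of [f * g] is proved
   the same way without the integration by parts. *)

From Stdlib Require Import Reals Lra Lia ClassicalEpsilon Classical.
From Coquelicot Require Hierarchy RInt RInt_analysis Derive.
Open Scope R_scope.

Lemma fsum_ext n u v : (forall i, (i < n)%nat -> u i = v i) -> fsum n u = fsum n v.
Proof.
induction n as [|n IH]; intros Huv; simpl; [reflexivity|].
rewrite (Huv n) by lia. rewrite IH; [reflexivity|intros; apply Huv; lia].
Qed.

Lemma fsum_plus n u v : fsum n (fun i => u i + v i) = fsum n u + fsum n v.
Proof. induction n as [|n IH]; simpl; [|rewrite IH]; lra. Qed.

Lemma fsum_minus n u v : fsum n (fun i => u i - v i) = fsum n u - fsum n v.
Proof. induction n as [|n IH]; simpl; [|rewrite IH]; lra. Qed.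

Lemma fsum_scal n c u : fsum n (fun i => c * u i) = c * fsum n u.
Proof. induction n as [|n IH]; simpl; [|rewrite IH]; lra. Qed.

Lemma fsum_le n u v : (forall i, (i < n)%nat -> u i <= v i) -> fsum n u <= fsum n v.
Proof.
induction n as [|n IH]; intros Huv; simpl; [lra|].
assert (u n <= v n) by (apply Huv; lia).
assert (fsum n u <= fsum n v) by (apply IH; intros; apply Huv; lia).
lra.
Qed.

Lemma Rabs_fsum_le n u : Rabs (fsum n u) <= fsum n (fun i => Rabs (u i)).
Proof.
induction n as [|n IH]; simpl; [rewrite Rabs_R0; lra|].
eapply Rle_trans; [apply Rabs_triang|lra].
Qed.

Lemma fsum_telescope n u : fsum n (fun i => u (S i) - u i) = u n - u O.
Proof. induction n as [|n IH]; simpl; [|rewrite IH]; lra. Qed.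

Lemma fsum_add n m u : fsum (n + m) u = fsum n u + fsum m (fun i => u (n + i)%nat).
Proof.
induction m as [|m IH]; simpl; [rewrite Nat.add_0_r; lra|].
rewrite Nat.add_succ_r; simpl; rewrite IH; lra.
Qed.

Lemma fsum_S_l n u : fsum (S n) u = u O + fsum n (fun i => u (S i)).
Proof. induction n as [|n IH]; simpl in *; [|rewrite IH]; lra. Qed.

Lemma fsum_swap n m (a : nat -> nat -> R) :
  fsum n (fun i => fsum m (fun j => a i j)) = fsum m (fun j => fsum n (fun i => a i j)).
Proof.
induction n as [|n IH]; simpl.
- induction m; simpl; lra.
- rewrite IH, <- fsum_plus; reflexivity.
Qed.

Lemma fsum_rev n u : fsum n (fun i => u (n - S i)%nat) = fsum n u.
Proof.
revert u; induction n as [|n IH]; intros u; [reflexivity|].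
rewrite (fsum_S_l n u), <- (IH (fun i => u (S i))); simpl fsum at 1.
rewrite Nat.sub_diag, Rplus_comm.
f_equal; apply fsum_ext; intros i Hi; f_equal; lia.
Qed.

Lemma le_of_le_plus_scaled_eps X Y C :
  0 <= C -> (forall eta, eta > 0 -> X <= Y + C * eta) -> X <= Y.
Proof.
intros HC HXY. apply Rle_plus_epsilon. intros eps Heps.
assert (Ht : eps / (C + 1) > 0) by (apply Rdiv_lt_0_compat; lra).
assert (Heq : (C + 1) * (eps / (C + 1)) = eps) by (field; lra).
specialize (HXY _ Ht). nra.
Qed.

Lemma scaled_eps_pos eps V : eps > 0 -> 0 <= V -> eps / (2 * (V + 1)) > 0.
Proof. intros; apply Rdiv_lt_0_compat; lra. Qed.

Lemma scaled_eps_mult_lt eps V : eps > 0 -> 0 <= V -> V * (eps / (2 * (V + 1))) < eps.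
Proof.
intros Heps HV.
assert (Heq : 2 * (V + 1) * (eps / (2 * (V + 1))) = eps) by (field; lra).
pose proof (scaled_eps_pos eps V Heps HV). nra.
Qed.

Lemma exists_pos_le2 d1 d2 : d1 > 0 -> d2 > 0 -> exists d, d > 0 /\ d <= d1 /\ d <= d2.
Proof.
intros. exists (Rmin d1 d2).
split; [apply Rmin_pos; auto|split; [apply Rmin_l|apply Rmin_r]].
Qed.

Lemma eq_0_of_Rabs_lt_eps X : (forall eps, eps > 0 -> Rabs X < eps) -> X = 0.
Proof.
intros HX. destruct (Req_dec X 0) as [|HX0]; [assumption|].
specialize (HX _ (Rabs_pos_lt _ HX0)). lra.
Qed.

Lemma continuity_pt_iff f x : continuity_pt f x <->
  forall eps, eps > 0 -> exists d, d > 0 /\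
    forall y, Rabs (y - x) < d -> Rabs (f y - f x) < eps.
Proof.
split; intros Hf eps Heps; destruct (Hf eps Heps) as [d [Hd Hy]];
  exists d; split; auto.
- intros y Hyx. destruct (Req_dec y x) as [->|Hne].
  + unfold Rminus; rewrite Rplus_opp_r, Rabs_R0; lra.
  + apply (Hy y); split; [split; [exact I|auto]|exact Hyx].
- intros y [_ Hyx]. apply Hy, Hyx.
Qed.

Lemma continuity_pt_comp_reflect f c t :
  continuity_pt f (c - t) -> continuity_pt (fun y => f (c - y)) t.
Proof.
intros Hf. apply continuity_pt_iff. intros eps Heps.
destruct (proj1 (continuity_pt_iff _ _) Hf eps Heps) as [d [Hd Hdf]].
exists d; split; auto. intros y Hy. apply Hdf.
replace (c - y - (c - t)) with (- (y - t)) by ring. rewrite Rabs_Ropp; auto.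
Qed.

Lemma continuity_bounded_on f a b : a <= b ->
  (forall u, a <= u <= b -> continuity_pt f u) ->
  exists M, forall u, a <= u <= b -> Rabs (f u) <= M.
Proof.
intros Hab Hf.
destruct (continuity_ab_maj (fun u => Rabs (f u)) a b Hab) as [m [Hm _]].
- intros c Hc. apply (continuity_pt_comp f Rabs); [auto|apply Rcontinuity_abs].
- exists (Rabs (f m)); auto.
Qed.

Lemma uniform_continuity_on H a b : (forall u, a <= u <= b -> continuity_pt H u) ->
  forall e, e > 0 -> exists d, d > 0 /\ forall u v, a <= u <= b -> a <= v <= b ->
    Rabs (u - v) < 2 * d -> Rabs (H u - H v) <= e.
Proof.
intros Hc e He. destruct (Heine_cor2 Hc (mkposreal e He)) as [[d Hd] Hdd]. simpl in Hdd.
exists (d / 2). split; [lra|]. intros u v Hu Hv Huv. left. apply Hdd; auto. lra.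
Qed.

Lemma continuity_antiderivative (f : R -> R) :
  continuity f -> exists G, forall u, derivable_pt_lim G u (f u).
Proof.
intros Hf. exists (fun u => RInt.RInt (V := Hierarchy.R_CompleteNormedModule) f 0 u).
intros u. apply Derive.is_derive_Reals, RInt_analysis.is_derive_RInt with (a := 0).
- apply Hierarchy.filter_forall. intros b.
  apply (RInt.RInt_correct (V := Hierarchy.R_CompleteNormedModule)).
  apply (RInt.ex_RInt_continuous (V := Hierarchy.R_CompleteNormedModule)).
  intros z _. apply Hierarchy.continuity_pt_filterlim, Hf.
- apply Hierarchy.continuity_pt_filterlim, Hf.
Qed.

Lemma derivable_pt_lim_reflect G f c : (forall u, derivable_pt_lim G u (f u)) ->
  forall t, derivable_pt_lim (fun t => G (c - t)) t (- f (c - t)).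
Proof.
intros HG t.
assert (Hlin : derivable_pt_lim (fct_cte c - id)%F t (0 - 1))
  by (apply derivable_pt_lim_minus; [apply derivable_pt_lim_const|apply derivable_pt_lim_id]).
pose proof (derivable_pt_lim_comp _ G t _ _ Hlin (HG ((fct_cte c - id)%F t))) as Hcomp.
unfold minus_fct, fct_cte, id in Hcomp. replace (- f (c - t)) with (f (c - t) * (0 - 1)) by ring.
exact Hcomp.
Qed.

Lemma mean_value f f' a b : (forall t, derivable_pt_lim f t (f' t)) -> a < b ->
  exists c, a < c < b /\ f b - f a = f' c * (b - a).
Proof.
intros Hf Hab. destruct (MVT_cor2 f f' a b Hab (fun c _ => Hf c)) as [c [E Hc]].
exists c; auto.
Qed.

Lemma lim_pinf_unique u l1 l2 : lim_pinf u l1 -> lim_pinf u l2 -> l1 = l2.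
Proof.
intros H1 H2. apply Rminus_diag_uniq, eq_0_of_Rabs_lt_eps. intros eps Heps.
destruct (H1 (eps / 2)) as [M1 HM1]; [lra|]. destruct (H2 (eps / 2)) as [M2 HM2]; [lra|].
specialize (HM1 (Rmax M1 M2) (Rle_ge _ _ (Rmax_l _ _))).
specialize (HM2 (Rmax M1 M2) (Rle_ge _ _ (Rmax_r _ _))).
apply Rabs_def2 in HM1; apply Rabs_def2 in HM2; apply Rabs_def1; lra.
Qed.

Lemma at_pinf_eq u l : lim_pinf u l -> at_pinf u = l.
Proof.
intros Hl. apply (lim_pinf_unique u); [|exact Hl].
unfold at_pinf. apply epsilon_spec. exists l; exact Hl.
Qed.
Definition mono_seq (x : nat -> R) (n : nat) : Prop :=
  forall i, (i < n)%nat -> x i <= x (S i).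

Definition variation_sum (g : R -> R) (x : nat -> R) (n : nat) : R :=
  fsum n (fun i => Rabs (g (x (S i)) - g (x i))).

Lemma variation_sum_app g x p y q : mono_seq x p -> mono_seq y q -> x p <= y O ->
  exists z, mono_seq z (p + S q) /\ z (p + S q)%nat = y q /\
    variation_sum g x p + variation_sum g y q <= variation_sum g z (p + S q).
Proof.
intros Hx Hy Hxy.
set (z := fun k => if (k <=? p)%nat then x k else y (k - S p)%nat).
exists z. split; [|split].
- intros i Hi. unfold z. destruct (Nat.leb_spec i p), (Nat.leb_spec (S i) p); try lia.
  + apply Hx; lia.
  + replace i with p by lia. rewrite Nat.sub_diag. exact Hxy.
  + replace (S i - S p)%nat with (S (i - S p)) by lia. apply Hy; lia.
- unfold z. destruct (Nat.leb_spec (p + S q) p); [lia|]. f_equal; lia.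
- assert (Ex : fsum p (fun i => Rabs (g (z (S i)) - g (z i))) = variation_sum g x p).
  { apply fsum_ext. intros i Hi. unfold z.
    destruct (Nat.leb_spec (S i) p), (Nat.leb_spec i p); try lia. reflexivity. }
  assert (Ey : fsum q (fun i => Rabs (g (z (S (p + S i))) - g (z (p + S i)%nat)))
               = variation_sum g y q).
  { apply fsum_ext. intros i Hi. unfold z.
    destruct (Nat.leb_spec (S (p + S i)) p), (Nat.leb_spec (p + S i) p); try lia.
    do 4 f_equal; lia. }
  unfold variation_sum at 3. rewrite fsum_add, fsum_S_l, Ex. rewrite <- Ey.
  pose proof (Rabs_pos (g (z (S (p + 0))) - g (z (p + 0)%nat))). lra.
Qed.

Lemma bounded_variation_bound g : bounded_variation g ->
  exists V, 0 <= V /\ forall n x, mono_seq x n -> variation_sum g x n <= V.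
Proof.
intros [V HV]. exists V. split; [|exact HV].
apply (HV O (fun _ => 0)). intros; lia.
Qed.

Lemma Rabs_le_variation g u v V : u <= v ->
  (forall n x, mono_seq x n -> x O = u -> variation_sum g x n <= V) ->
  Rabs (g v - g u) <= V.
Proof.
intros Huv HV.
specialize (HV 1%nat (fun i => match i with O => u | _ => v end)).
unfold variation_sum in HV; simpl in HV.
assert (Hm : mono_seq (fun i => match i with O => u | _ => v end) 1)
  by (intros i Hi; replace i with O by lia; exact Huv).
specialize (HV Hm eq_refl). lra.
Qed.

Lemma bounded_variation_osc g V : (forall n x, mono_seq x n -> variation_sum g x n <= V) ->
  forall u v, Rabs (g u - g v) <= V.
Proof.
intros HV u v. destruct (Rle_dec u v).
- rewrite Rabs_minus_sym. apply Rabs_le_variation; auto.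
- apply Rabs_le_variation; [lra|auto].
Qed.

Lemma bounded_variation_not_unbounded g eps : bounded_variation g -> eps > 0 ->
  ~ (forall K : nat, exists n x, mono_seq x n /\ INR K * eps <= variation_sum g x n).
Proof.
intros Hbv Heps Hunb. destruct Hbv as [V HV].
destruct (INR_unbounded (V / eps)) as [K HK].
destruct (Hunb K) as [n [x [Hm Hs]]]. specialize (HV n x Hm).
change (variation_sum g x n <= V) in HV.
assert (Heq : eps * (V / eps) = V) by (field; lra).
assert (eps * (V / eps) < eps * INR K) by (apply Rmult_lt_compat_l; lra).
lra.
Qed.

(* The variation of a function of bounded variation over [M, +oo) tends to 0:
   otherwise infinitely many disjoint chunks of variation > eps could be chained. *)
Lemma variation_tail_pinf g : bounded_variation g -> forall eps, eps > 0 ->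
  exists M, forall n x, mono_seq x n -> M <= x O -> variation_sum g x n <= eps.
Proof.
intros Hbv eps Heps. apply NNPP. intros Hno.
apply (bounded_variation_not_unbounded g eps Hbv Heps).
assert (Hbig : forall M, exists n x, mono_seq x n /\ M <= x O /\ eps < variation_sum g x n).
{ intros M. apply NNPP. intros Hsmall. apply Hno. exists M. intros n x Hm HM.
  apply Rnot_lt_le. intros Hlt. apply Hsmall. exists n, x. auto. }
induction K as [|K [n [x [Hm Hs]]]].
- exists O, (fun _ => 0). split; [intros i Hi; lia|]. unfold variation_sum; simpl; lra.
- destruct (Hbig (x n)) as [m [y [Hm' [Hy Hs']]]].
  destruct (variation_sum_app g x n y m Hm Hm' Hy) as [z [Hz [_ Hzs]]].
  exists (n + S m)%nat, z. split; [exact Hz|]. rewrite S_INR. lra.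
Qed.

Lemma mono_seq_reflect x n c : mono_seq x n -> mono_seq (fun i => c - x (n - i)%nat) n.
Proof.
intros Hx i Hi. specialize (Hx (n - S i)%nat ltac:(lia)).
replace (S (n - S i)) with (n - i)%nat in Hx by lia. lra.
Qed.

Lemma variation_sum_reflect g x n c :
  variation_sum (fun t => g (c - t)) (fun i => c - x (n - i)%nat) n = variation_sum g x n.
Proof.
unfold variation_sum. rewrite <- fsum_rev. apply fsum_ext. intros i Hi.
replace (n - S (n - S i))%nat with i by lia.
replace (n - (n - S i))%nat with (S i) by lia.
rewrite Rabs_minus_sym. do 3 f_equal; ring.
Qed.

Lemma bounded_variation_reflect g c :
  bounded_variation g -> bounded_variation (fun t => g (c - t)).
Proof.
intros [V HV]. exists V. intros n y Hy.
specialize (HV n (fun i => c - y (n - i)%nat) (mono_seq_reflect y n c Hy)).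
change (variation_sum g (fun i => c - y (n - i)%nat) n <= V) in HV.
rewrite <- variation_sum_reflect with (c := c) in HV.
eapply Rle_trans; [|exact HV]. right. apply fsum_ext. intros i Hi.
replace (n - (n - S i))%nat with (S i) by lia.
replace (n - (n - i))%nat with i by lia. do 3 f_equal; ring.
Qed.

Lemma variation_tail_minf g : bounded_variation g -> forall eps, eps > 0 ->
  exists M, forall n x, mono_seq x n -> x n <= M -> variation_sum g x n <= eps.
Proof.
intros Hbv eps Heps.
destruct (variation_tail_pinf _ (bounded_variation_reflect g 0 Hbv) eps Heps) as [M HM].
exists (- M). intros n x Hx HxM. rewrite <- (variation_sum_reflect g x n 0).
apply HM; [apply mono_seq_reflect, Hx|]. rewrite Nat.sub_0_r. lra.
Qed.

Lemma osc_tail_pinf g : bounded_variation g -> forall eps, eps > 0 ->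
  exists M, forall u v, M <= u -> M <= v -> Rabs (g u - g v) <= eps.
Proof.
intros Hbv eps Heps. destruct (variation_tail_pinf g Hbv eps Heps) as [M HM].
exists M. intros u v Hu Hv.
destruct (Rle_dec u v) as [Huv|Huv]; [rewrite Rabs_minus_sym|];
  apply Rabs_le_variation; try lra; intros n x Hx Hx0; apply HM; auto; lra.
Qed.

(* If both [g] and its derivative [h] have bounded variation, then [h] vanishes at
   [+oo]: [h] is eventually almost constant, and a nonzero value would make [g] grow
   linearly, contradicting the boundedness of [g]. *)
Lemma derivative_tail_pinf g h : bounded_variation g -> bounded_variation h ->
  (forall t, derivable_pt_lim g t (h t)) ->
  forall eps, eps > 0 -> exists M, forall t, M <= t -> Rabs (h t) < eps.
Proof.
intros Hg Hh Hd eps Heps. destruct (bounded_variation_bound g Hg) as [Vg [HVg0 HVg]].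
destruct (osc_tail_pinf h Hh (eps / 2)) as [M HM]; [lra|].
exists M. intros t Ht. apply Rnot_le_lt. intros Hbig.
set (T := 2 * (Vg + 1) / eps).
assert (HT : T > 0) by (apply Rdiv_lt_0_compat; lra).
assert (HTeps : eps / 2 * T = Vg + 1) by (unfold T; field; lra).
destruct (mean_value g h M (M + T) Hd) as [c [Hc Hgc]]; [lra|].
assert (Hhc : Rabs (h c) >= eps / 2).
{ specialize (HM c t ltac:(lra) Ht).
  pose proof (Rabs_triang (h c) (h t - h c)). replace (h c + (h t - h c)) with (h t) in H by ring.
  rewrite Rabs_minus_sym in HM. lra. }
pose proof (bounded_variation_osc g Vg HVg (M + T) M) as Hosc.
rewrite Hgc, Rabs_mult in Hosc. replace (M + T - M) with T in Hosc by ring.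
rewrite (Rabs_right T) in Hosc by lra. nra.
Qed.

Lemma derivative_tail_minf g h : bounded_variation g -> bounded_variation h ->
  (forall t, derivable_pt_lim g t (h t)) ->
  forall eps, eps > 0 -> exists M, forall t, t <= M -> Rabs (h t) < eps.
Proof.
intros Hg Hh Hd eps Heps.
assert (Hg' : bounded_variation (fun t => - g (0 - t))).
{ destruct (bounded_variation_reflect g 0 Hg) as [V HV]. exists V.
  intros n x Hx. eapply Rle_trans; [|apply (HV n x Hx)]. right. apply fsum_ext.
  intros i _. rewrite <- Rabs_Ropp. f_equal. ring. }
assert (Hd' : forall t, derivable_pt_lim (fun t => - g (0 - t)) t (h (0 - t))).
{ intros t. pose proof (derivable_pt_lim_opp _ t _ (derivable_pt_lim_reflect g h 0 Hd t)) as Hopp.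
  unfold opp_fct in Hopp. rewrite Ropp_involutive in Hopp. exact Hopp. }
destruct (derivative_tail_pinf _ _ Hg' (bounded_variation_reflect h 0 Hh) Hd' eps Heps)
  as [M HM].
exists (- M). intros t Ht. specialize (HM (- t) ltac:(lra)).
replace (0 - - t) with t in HM by ring. exact HM.
Qed.

Lemma derivative_vanishes_at_infinity g h : bounded_variation g -> bounded_variation h ->
  (forall t, derivable_pt_lim g t (h t)) ->
  forall eps, eps > 0 -> exists M, 0 <= M /\ forall t, M <= Rabs t -> Rabs (h t) < eps.
Proof.
intros Hg Hh Hd eps Heps.
destruct (derivative_tail_pinf g h Hg Hh Hd eps Heps) as [Mp HMp].
destruct (derivative_tail_minf g h Hg Hh Hd eps Heps) as [Mn HMn].
exists (Rmax (Rmax Mp (- Mn)) 0). split; [apply Rmax_r|]. intros t Ht.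
pose proof (Rmax_l (Rmax Mp (- Mn)) 0).
pose proof (Rmax_l Mp (- Mn)). pose proof (Rmax_r Mp (- Mn)).
destruct (Rle_dec 0 t).
- apply HMp. rewrite Rabs_right in Ht by lra. lra.
- apply HMn. rewrite Rabs_left in Ht by lra. lra.
Qed.

Definition tagged_partition (x t : nat -> R) (n : nat) (a b d : R) : Prop :=
  x O = a /\ x n = b /\ forall i, (i < n)%nat -> x i <= t i <= x (S i) /\ x (S i) - x i < d.

Definition rs_sum (H g : R -> R) (x t : nat -> R) (n : nat) : R :=
  fsum n (fun i => H (t i) * (g (x (S i)) - g (x i))).

Lemma RS_integral_on_iff H g a b I : RS_integral_on H g a b I <->
  forall eps, eps > 0 -> exists d, d > 0 /\
    forall n x t, tagged_partition x t n a b d -> Rabs (rs_sum H g x t n - I) < eps.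
Proof.
split; intros HI eps Heps; destruct (HI eps Heps) as [d [Hd Hp]]; exists d; split; auto.
- intros n x t [H0 [Hn Hxt]]. apply Hp; auto.
- intros n x t H0 Hn Hxt. apply Hp. split; auto.
Qed.

Lemma tagged_partition_mono x t n a b d : tagged_partition x t n a b d -> mono_seq x n.
Proof. intros [_ [_ Hxt]] i Hi. destruct (Hxt i Hi). lra. Qed.

Lemma tagged_partition_weaken x t n a b d d' :
  d <= d' -> tagged_partition x t n a b d -> tagged_partition x t n a b d'.
Proof.
intros Hd [H0 [Hn Hxt]]. split; [|split]; auto.
intros i Hi. destruct (Hxt i Hi). split; [auto|lra].
Qed.

Lemma tagged_partition_bounds x t n a b d : tagged_partition x t n a b d ->
  forall i, (i <= n)%nat -> a <= x i <= b.
Proof.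
intros Hp. pose proof (tagged_partition_mono _ _ _ _ _ _ Hp) as Hm.
destruct Hp as [H0 [Hn _]].
assert (Hlo : forall i, (i <= n)%nat -> a <= x i).
{ induction i as [|i IH]; intros Hi; [lra|].
  specialize (IH ltac:(lia)). specialize (Hm i ltac:(lia)). lra. }
assert (Hhi : forall k, (k <= n)%nat -> x (n - k)%nat <= b).
{ induction k as [|k IH]; intros Hk; [rewrite Nat.sub_0_r; lra|].
  specialize (IH ltac:(lia)). specialize (Hm (n - S k)%nat ltac:(lia)).
  replace (S (n - S k)) with (n - k)%nat in Hm by lia. lra. }
intros i Hi. split; [auto|]. replace i with (n - (n - i))%nat by lia. apply Hhi; lia.
Qed.

Definition uniform_partition (a b : R) (N i : nat) : R := a + INR i * (b - a) / INR N.

Lemma uniform_partition_S a b N i : (0 < N)%nat ->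
  uniform_partition a b N (S i) = uniform_partition a b N i + (b - a) / INR N.
Proof.
intros HN. assert (0 < INR N) by (apply lt_0_INR; lia).
unfold uniform_partition. rewrite S_INR. field. lra.
Qed.

Lemma uniform_partition_fine a b d : a <= b -> d > 0 -> exists N0, forall N, (N0 <= N)%nat ->
  (0 < N)%nat /\
  tagged_partition (uniform_partition a b N) (uniform_partition a b N) N a b d.
Proof.
intros Hab Hd. destruct (INR_unbounded ((b - a) / d)) as [N0 HN0].
exists (S N0). intros N HN. split; [lia|].
assert (HN0N : INR N0 <= INR N) by (apply le_INR; lia).
assert (HNpos : 0 < INR N) by (apply lt_0_INR; lia).
assert (Hstep : 0 <= (b - a) / INR N < d).
{ split; [apply Rmult_le_pos; [lra|left; apply Rinv_0_lt_compat; lra]|].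
  apply Rmult_lt_reg_r with (INR N); auto.
  unfold Rdiv at 1. rewrite Rmult_assoc, Rinv_l by lra.
  assert (Heq : d * ((b - a) / d) = b - a) by (field; lra).
  assert (d * ((b - a) / d) < d * INR N) by (apply Rmult_lt_compat_l; lra). lra. }
split; [|split].
- unfold uniform_partition. simpl. unfold Rdiv. ring.
- unfold uniform_partition. field. lra.
- intros i Hi. rewrite uniform_partition_S by lia. lra.
Qed.

Lemma variation_sum_blocks (g : R -> R) V (w : nat -> nat -> R) n m :
  (forall p z, mono_seq z p -> variation_sum g z p <= V) ->
  (forall i, (i < n)%nat -> mono_seq (w i) m) ->
  (forall i, (S i < n)%nat -> w i m <= w (S i) O) ->
  fsum n (fun i => variation_sum g (w i) m) <= V.
Proof.
intros HV Hm Hj.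
assert (Hchain : forall k, (k <= n)%nat -> exists p z, mono_seq z p /\
   fsum k (fun i => variation_sum g (w i) m) <= variation_sum g z p /\
   ((k < n)%nat -> z p <= w k O)).
{ induction k as [|k IH]; intros Hk.
  - exists O, (fun _ => w O O). split; [intros i Hi; lia|].
    split; [unfold variation_sum; simpl; lra|intros _; lra].
  - destruct (IH ltac:(lia)) as [p [z [Hz [Hzs Hzend]]]].
    destruct (variation_sum_app g z p (w k) m Hz (Hm k ltac:(lia)) (Hzend ltac:(lia)))
      as [z' [Hz' [Hz'end Hz's]]].
    exists (p + S m)%nat, z'. split; [exact Hz'|]. split; [simpl; lra|].
    intros Hk'. rewrite Hz'end. apply Hj. lia. }
destruct (Hchain n (le_n n)) as [p [z [Hz [Hzs _]]]]. specialize (HV p z Hz). lra.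
Qed.

Definition clamp (lo hi z : R) : R := Rmax lo (Rmin z hi).

Lemma clamp_ends lo hi a b : lo <= hi -> a <= lo -> hi <= b ->
  clamp lo hi a = lo /\ clamp lo hi b = hi.
Proof.
intros. unfold clamp. rewrite (Rmin_left a hi), (Rmin_right b hi) by lra.
rewrite Rmax_left, Rmax_right by lra. auto.
Qed.

Lemma clamp_mono lo hi u v : u <= v -> clamp lo hi u <= clamp lo hi v.
Proof. intros. apply Rle_max_compat_l, Rle_min_compat_r. auto. Qed.

(* Either the intervals [xi, xi1] and [yj, yj1] overlap, and clamping each into the
   other gives the same intersection, or the clamped increments are both zero. *)
Lemma clamp_cases xi xi1 yj yj1 : xi <= xi1 -> yj <= yj1 ->
  (clamp xi xi1 yj1 = clamp yj yj1 xi1 /\ clamp xi xi1 yj = clamp yj yj1 xi /\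
    Rmax xi yj <= Rmin xi1 yj1) \/
  (clamp xi xi1 yj1 = clamp xi xi1 yj /\ clamp yj yj1 xi1 = clamp yj yj1 xi).
Proof.
intros. unfold clamp, Rmax, Rmin.
repeat match goal with
  | |- context [Rle_dec ?a ?b] => destruct (Rle_dec a b)
  | H : context [Rle_dec ?a ?b] |- _ => destruct (Rle_dec a b) end;
  try (left; repeat split; lra); try (right; split; lra).
Qed.

Lemma rs_sum_refine H g x t n y m a b d : tagged_partition x t n a b d ->
  y O = a -> y m = b ->
  rs_sum H g x t n = fsum n (fun i => fsum m (fun j =>
    H (t i) * (g (clamp (x i) (x (S i)) (y (S j))) - g (clamp (x i) (x (S i)) (y j))))).
Proof.
intros Hp Hy0 Hym. pose proof (tagged_partition_bounds _ _ _ _ _ _ Hp) as Hb.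
pose proof (tagged_partition_mono _ _ _ _ _ _ Hp) as Hm.
apply fsum_ext. intros i Hi.
rewrite fsum_scal, (fsum_telescope m (fun j => g (clamp (x i) (x (S i)) (y j)))), Hy0, Hym.
assert (Hi0 := Hb i ltac:(lia)). assert (Hi1 := Hb (S i) ltac:(lia)).
assert (Hxi := Hm i Hi).
destruct (clamp_ends (x i) (x (S i)) a b) as [-> ->]; auto; lra.
Qed.

Lemma rs_sum_refine_swap H g x t n y s m a b d :
  tagged_partition x t n a b d -> tagged_partition y s m a b d ->
  rs_sum H g y s m = fsum n (fun i => fsum m (fun j =>
    H (s j) * (g (clamp (x i) (x (S i)) (y (S j))) - g (clamp (x i) (x (S i)) (y j))))).
Proof.
intros Px Py.
pose proof (tagged_partition_mono _ _ _ _ _ _ Px) as Mx.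
pose proof (tagged_partition_mono _ _ _ _ _ _ Py) as My.
rewrite (rs_sum_refine H g y s m x n a b d Py) by apply Px.
rewrite (fsum_swap n m (fun i j =>
  H (s j) * (g (clamp (x i) (x (S i)) (y (S j))) - g (clamp (x i) (x (S i)) (y j))))).
apply fsum_ext. intros j Hj. apply fsum_ext. intros i Hi.
destruct (clamp_cases (x i) (x (S i)) (y j) (y (S j)) (Mx i Hi) (My j Hj))
  as [[E1 [E2 _]]|[E1 E2]]; rewrite E1, E2; ring.
Qed.

Lemma overlapping_cells_close u0 u1 v0 v1 t s d :
  u0 <= t <= u1 -> v0 <= s <= v1 -> u1 - u0 < d -> v1 - v0 < d ->
  Rmax u0 v0 <= Rmin u1 v1 -> Rabs (t - s) < 2 * d.
Proof.
intros. pose proof (Rmax_l u0 v0). pose proof (Rmax_r u0 v0).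
pose proof (Rmin_l u1 v1). pose proof (Rmin_r u1 v1). apply Rabs_def1; lra.
Qed.

Lemma variation_sum_clamped_le g V x t n y m a b d :
  (forall p z, mono_seq z p -> variation_sum g z p <= V) ->
  tagged_partition x t n a b d -> mono_seq y m -> y O = a -> y m = b ->
  fsum n (fun i => variation_sum g (fun j => clamp (x i) (x (S i)) (y j)) m) <= V.
Proof.
intros HV Px My Hy0 Hym.
pose proof (tagged_partition_bounds _ _ _ _ _ _ Px) as Bx.
pose proof (tagged_partition_mono _ _ _ _ _ _ Px) as Mx.
apply (variation_sum_blocks g V _ n m HV).
- intros i Hi j Hj. apply clamp_mono, My, Hj.
- intros i Hi. rewrite Hy0, Hym.
  pose proof (Bx i ltac:(lia)); pose proof (Bx (S i) ltac:(lia)).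
  pose proof (Bx (S (S i)) ltac:(lia)).
  assert (M0 := Mx i ltac:(lia)). assert (M1 := Mx (S i) Hi).
  rewrite (proj2 (clamp_ends (x i) (x (S i)) a b M0 ltac:(lra) ltac:(lra))).
  rewrite (proj1 (clamp_ends (x (S i)) (x (S (S i))) a b M1 ltac:(lra) ltac:(lra))). lra.
Qed.

(* Two Riemann-Stieltjes sums over partitions of mesh [< d] are compared on their
   common refinement; only pairs of overlapping cells contribute, and their tags are
   within [2 d] of each other. *)
Lemma rs_sum_compare H g V a b d e x t n y s m :
  (forall p z, mono_seq z p -> variation_sum g z p <= V) -> 0 <= e ->
  tagged_partition x t n a b d -> tagged_partition y s m a b d ->
  (forall u v, a <= u <= b -> a <= v <= b -> Rabs (u - v) < 2 * d -> Rabs (H u - H v) <= e) ->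
  Rabs (rs_sum H g x t n - rs_sum H g y s m) <= e * V.
Proof.
intros HV He Px Py HH.
pose proof (tagged_partition_mono _ _ _ _ _ _ Px) as Mx.
pose proof (tagged_partition_mono _ _ _ _ _ _ Py) as My.
set (dd := fun i j => g (clamp (x i) (x (S i)) (y (S j))) - g (clamp (x i) (x (S i)) (y j))).
assert (Hterm : forall i j, (i < n)%nat -> (j < m)%nat ->
          Rabs (H (t i) - H (s j)) * Rabs (dd i j) <= e * Rabs (dd i j)).
{ intros i j Hi Hj. unfold dd.
  destruct (clamp_cases (x i) (x (S i)) (y j) (y (S j)) (Mx i Hi) (My j Hj))
    as [[_ [_ Hover]]|[E1 _]].
  - apply Rmult_le_compat_r; [apply Rabs_pos|].
    pose proof (tagged_partition_bounds _ _ _ _ _ _ Px (S i) ltac:(lia)).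
    pose proof (tagged_partition_bounds _ _ _ _ _ _ Py (S j) ltac:(lia)).
    pose proof (tagged_partition_bounds _ _ _ _ _ _ Px i ltac:(lia)).
    pose proof (tagged_partition_bounds _ _ _ _ _ _ Py j ltac:(lia)).
    destruct Px as [_ [_ Px]]. destruct Py as [_ [_ Py]].
    destruct (Px i Hi) as [Ht Hxd]. destruct (Py j Hj) as [Hs Hyd].
    apply HH; [lra|lra|]. exact (overlapping_cells_close _ _ _ _ _ _ d Ht Hs Hxd Hyd Hover).
  - rewrite E1, (Rminus_diag_eq (g _) (g _) eq_refl), Rabs_R0. lra. }
rewrite (rs_sum_refine H g x t n y m a b d Px) by apply Py.
rewrite (rs_sum_refine_swap H g x t n y s m a b d Px Py), <- fsum_minus.
eapply Rle_trans; [apply Rabs_fsum_le|].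
apply Rle_trans with
  (fsum n (fun i => e * variation_sum g (fun j => clamp (x i) (x (S i)) (y j)) m)).
- apply fsum_le. intros i Hi. rewrite <- fsum_minus.
  eapply Rle_trans; [apply Rabs_fsum_le|].
  unfold variation_sum. rewrite <- fsum_scal. apply fsum_le. intros j Hj.
  fold (dd i j).
  replace (H (t i) * dd i j - H (s j) * dd i j) with ((H (t i) - H (s j)) * dd i j) by ring.
  rewrite Rabs_mult. apply Hterm; auto.
- rewrite fsum_scal. apply Rmult_le_compat_l; [exact He|].
  destruct Py as [Hy0 [Hym _]]. apply (variation_sum_clamped_le g V x t n y m a b d); auto.
Qed.

Lemma rs_sum_near_uniform H g a b : a <= b ->
  (forall u, a <= u <= b -> continuity_pt H u) -> bounded_variation g ->
  forall eps, eps > 0 -> exists d N0, d > 0 /\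
    forall n x t N, tagged_partition x t n a b d -> (N0 <= N)%nat ->
    Rabs (rs_sum H g x t n
          - rs_sum H g (uniform_partition a b N) (uniform_partition a b N) N) < eps.
Proof.
intros Hab Hc Hbv eps Heps. destruct (bounded_variation_bound g Hbv) as [V [HV0 HV]].
set (e := eps / (2 * (V + 1))).
assert (He : e > 0) by apply (scaled_eps_pos eps V Heps HV0).
destruct (uniform_continuity_on H a b Hc e He) as [d [Hd Hdd]].
destruct (uniform_partition_fine a b d Hab Hd) as [N0 HN0].
exists d, N0. split; [exact Hd|]. intros n x t N Hx HN. destruct (HN0 N HN) as [_ HuN].
pose proof (rs_sum_compare H g V a b d e _ _ _ _ _ _ HV (Rlt_le _ _ He) Hx HuN Hdd).
pose proof (scaled_eps_mult_lt eps V Heps HV0). fold e in H1. lra.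
Qed.

Lemma RS_integral_on_exists H g a b : a <= b ->
  (forall u, a <= u <= b -> continuity_pt H u) -> bounded_variation g ->
  exists I, RS_integral_on H g a b I.
Proof.
intros Hab Hc Hbv.
set (s := fun N => rs_sum H g (uniform_partition a b N) (uniform_partition a b N) N).
assert (Hcs : Cauchy_crit s).
{ intros eps Heps. destruct (rs_sum_near_uniform H g a b Hab Hc Hbv eps Heps)
    as [d [N0 [Hd Hnear]]].
  destruct (uniform_partition_fine a b d Hab Hd) as [N1 HN1].
  exists (max N0 N1). intros p q Hp Hq. unfold Rdist, s.
  apply Hnear; [apply HN1|]; lia. }
destruct (Rcomplete.R_complete s Hcs) as [l Hl].
exists l. apply RS_integral_on_iff. intros eps Heps.
destruct (rs_sum_near_uniform H g a b Hab Hc Hbv (eps / 2)) as [d [N0 [Hd Hnear]]]; [lra|].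
exists d. split; [exact Hd|]. intros n x t Hx.
destruct (Hl (eps / 2)) as [N1 HN1]; [lra|].
specialize (HN1 (max N0 N1) ltac:(lia)). specialize (Hnear n x t (max N0 N1) Hx ltac:(lia)).
unfold Rdist, s in HN1.
set (su := rs_sum H g _ _ (max N0 N1)) in *.
replace (rs_sum H g x t n - l) with ((rs_sum H g x t n - su) + (su - l)) by ring.
eapply Rle_lt_trans; [apply Rabs_triang|lra].
Qed.

Lemma RS_integral_on_ext H1 H2 g a b I : (forall t, H1 t = H2 t) ->
  RS_integral_on H1 g a b I -> RS_integral_on H2 g a b I.
Proof.
intros E HI. apply RS_integral_on_iff. intros eps Heps.
destruct (proj1 (RS_integral_on_iff _ _ _ _ _) HI eps Heps) as [d [Hd P]].
exists d; split; [exact Hd|]. intros n x t Hx. specialize (P n x t Hx). unfold rs_sum in *.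
rewrite (fsum_ext n _ (fun i => H1 (t i) * (g (x (S i)) - g (x i)))); [exact P|].
intros i _. rewrite E. reflexivity.
Qed.

Lemma RS_integral_on_lincomb H1 H2 g a b I1 I2 c1 c2 :
  RS_integral_on H1 g a b I1 -> RS_integral_on H2 g a b I2 ->
  RS_integral_on (fun t => c1 * H1 t + c2 * H2 t) g a b (c1 * I1 + c2 * I2).
Proof.
intros HI1 HI2. apply RS_integral_on_iff. intros eps Heps.
set (C := Rabs c1 + Rabs c2).
assert (HC : 0 <= C) by (pose proof (Rabs_pos c1); pose proof (Rabs_pos c2); unfold C; lra).
set (e := eps / (2 * (C + 1))).
assert (He : e > 0) by apply (scaled_eps_pos eps C Heps HC).
destruct (proj1 (RS_integral_on_iff _ _ _ _ _) HI1 e He) as [d1 [Hd1 P1]].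
destruct (proj1 (RS_integral_on_iff _ _ _ _ _) HI2 e He) as [d2 [Hd2 P2]].
exists (Rmin d1 d2). split; [apply Rmin_pos; auto|]. intros n x t Hx.
specialize (P1 n x t (tagged_partition_weaken _ _ _ _ _ _ _ (Rmin_l _ _) Hx)).
specialize (P2 n x t (tagged_partition_weaken _ _ _ _ _ _ _ (Rmin_r _ _) Hx)).
assert (E : rs_sum (fun t => c1 * H1 t + c2 * H2 t) g x t n
            = c1 * rs_sum H1 g x t n + c2 * rs_sum H2 g x t n).
{ unfold rs_sum. rewrite <- !fsum_scal, <- fsum_plus. apply fsum_ext. intros; ring. }
rewrite E.
replace (c1 * rs_sum H1 g x t n + c2 * rs_sum H2 g x t n - (c1 * I1 + c2 * I2))
  with (c1 * (rs_sum H1 g x t n - I1) + c2 * (rs_sum H2 g x t n - I2)) by ring.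
eapply Rle_lt_trans; [apply Rabs_triang|]. rewrite !Rabs_mult.
assert (Rabs c1 * Rabs (rs_sum H1 g x t n - I1) <= Rabs c1 * e)
  by (apply Rmult_le_compat_l; [apply Rabs_pos|lra]).
assert (Rabs c2 * Rabs (rs_sum H2 g x t n - I2) <= Rabs c2 * e)
  by (apply Rmult_le_compat_l; [apply Rabs_pos|lra]).
assert (HCe := scaled_eps_mult_lt eps C Heps HC). fold e in HCe. unfold C in HCe. lra.
Qed.

Lemma RS_integral_on_scal H g a b I c : RS_integral_on H g a b I ->
  RS_integral_on (fun t => c * H t) g a b (c * I).
Proof.
intros HI. apply (RS_integral_on_ext (fun t => c * H t + 0 * H t)); [intros; ring|].
replace (c * I) with (c * I + 0 * I) by ring. apply RS_integral_on_lincomb; auto.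
Qed.

Lemma RS_integral_on_minus H1 H2 g a b I1 I2 :
  RS_integral_on H1 g a b I1 -> RS_integral_on H2 g a b I2 ->
  RS_integral_on (fun t => H1 t - H2 t) g a b (I1 - I2).
Proof.
intros HI1 HI2. apply (RS_integral_on_ext (fun t => 1 * H1 t + -1 * H2 t)); [intros; ring|].
replace (I1 - I2) with (1 * I1 + -1 * I2) by ring. apply RS_integral_on_lincomb; auto.
Qed.

Lemma RS_integral_on_Rabs_approx H g a b I K : a <= b -> RS_integral_on H g a b I ->
  (forall t, a <= t <= b -> Rabs (H t) <= K) ->
  forall eta, eta > 0 -> exists n x, mono_seq x n /\ x O = a /\ x n = b /\
    Rabs I <= K * variation_sum g x n + eta.
Proof.
intros Hab HI HK eta Heta.
destruct (proj1 (RS_integral_on_iff _ _ _ _ _) HI eta Heta) as [d [Hd P]].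
destruct (uniform_partition_fine a b d Hab Hd) as [N HN]. destruct (HN N (le_n N)) as [_ Hu].
set (x := uniform_partition a b N) in *. specialize (P _ _ _ Hu).
exists N, x. split; [apply (tagged_partition_mono _ _ _ _ _ _ Hu)|].
destruct Hu as [H0 [HNb Hux]]. split; [exact H0|]. split; [exact HNb|].
assert (Hsum : Rabs (rs_sum H g x x N) <= K * variation_sum g x N).
{ unfold rs_sum, variation_sum. rewrite <- fsum_scal.
  eapply Rle_trans; [apply Rabs_fsum_le|]. apply fsum_le. intros i Hi.
  rewrite Rabs_mult. apply Rmult_le_compat_r; [apply Rabs_pos|]. apply HK.
  pose proof (tagged_partition_bounds _ _ _ _ _ _ (conj H0 (conj HNb Hux)) i ltac:(lia)). lra. }
pose proof (Rabs_triang_inv I (I - rs_sum H g x x N)) as Htri.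
replace (I - (I - rs_sum H g x x N)) with (rs_sum H g x x N) in Htri by ring.
rewrite Rabs_minus_sym in P. lra.
Qed.

Lemma RS_integral_on_Rabs_le H g a b I K V : a <= b -> RS_integral_on H g a b I ->
  (forall t, a <= t <= b -> Rabs (H t) <= K) ->
  (forall n x, mono_seq x n -> variation_sum g x n <= V) -> Rabs I <= K * V.
Proof.
intros Hab HI HK HV.
assert (HK0 : 0 <= K) by (eapply Rle_trans; [apply Rabs_pos|apply (HK a)]; lra).
apply (le_of_le_plus_scaled_eps _ _ 1); [lra|]. intros eta Heta.
destruct (RS_integral_on_Rabs_approx H g a b I K Hab HI HK eta Heta) as [n [x [Hm [_ [_ Hb]]]]].
specialize (HV n x Hm). nra.
Qed.

Lemma RS_integral_on_Rabs_minus_le H1 H2 g a b I1 I2 K V : a <= b ->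
  RS_integral_on H1 g a b I1 -> RS_integral_on H2 g a b I2 ->
  (forall t, a <= t <= b -> Rabs (H1 t - H2 t) <= K) ->
  (forall n x, mono_seq x n -> variation_sum g x n <= V) -> Rabs (I1 - I2) <= K * V.
Proof.
intros Hab HI1 HI2 HK HV.
apply (RS_integral_on_Rabs_le (fun t => H1 t - H2 t) g a b _ K V Hab); auto.
apply RS_integral_on_minus; auto.
Qed.

Lemma tagged_partition_app x t n y s m a b c d :
  tagged_partition x t n a b d -> tagged_partition y s m b c d ->
  tagged_partition (fun k => if (k <=? n)%nat then x k else y (k - n)%nat)
    (fun k => if (k <? n)%nat then t k else s (k - n)%nat) (n + m) a c d.
Proof.
intros [Hx0 [Hxn Hx]] [Hy0 [Hym Hy]]. split; [|split].
- exact Hx0.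
- destruct (Nat.leb_spec (n + m) n).
  + replace m with O in * by lia. rewrite Nat.add_0_r. congruence.
  + rewrite <- Hym. f_equal. lia.
- intros i Hi. destruct (Nat.ltb_spec i n).
  + destruct (Nat.leb_spec i n), (Nat.leb_spec (S i) n); try lia. apply Hx; auto.
  + destruct (Nat.leb_spec (S i) n); [lia|].
    replace (S i - n)%nat with (S (i - n)) by lia.
    destruct (Nat.leb_spec i n).
    * replace i with n by lia. rewrite Hxn, Nat.sub_diag, <- Hy0. apply Hy. lia.
    * apply Hy. lia.
Qed.

Lemma rs_sum_app H g x t n y s m : x n = y O ->
  rs_sum H g (fun k => if (k <=? n)%nat then x k else y (k - n)%nat)
    (fun k => if (k <? n)%nat then t k else s (k - n)%nat) (n + m)
  = rs_sum H g x t n + rs_sum H g y s m.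
Proof.
intros E. unfold rs_sum. rewrite fsum_add. f_equal; apply fsum_ext; intros i Hi.
- destruct (Nat.ltb_spec i n), (Nat.leb_spec i n), (Nat.leb_spec (S i) n); try lia.
  reflexivity.
- destruct (Nat.ltb_spec (n + i) n), (Nat.leb_spec (S (n + i)) n); try lia.
  replace (n + i - n)%nat with i by lia. replace (S (n + i) - n)%nat with (S i) by lia.
  destruct (Nat.leb_spec (n + i) n).
  + replace i with O by lia. rewrite Nat.add_0_r, E. reflexivity.
  + replace (n + i - n)%nat with i by lia. reflexivity.
Qed.

Lemma RS_integral_on_chasles H g a b c I1 I2 I : a <= b -> b <= c ->
  RS_integral_on H g a b I1 -> RS_integral_on H g b c I2 -> RS_integral_on H g a c I ->
  I = I1 + I2.
Proof.
intros Hab Hbc HI1 HI2 HI. apply Rminus_diag_uniq, eq_0_of_Rabs_lt_eps. intros eps Heps.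
destruct (proj1 (RS_integral_on_iff _ _ _ _ _) HI1 (eps / 3)) as [d1 [Hd1 P1]]; [lra|].
destruct (proj1 (RS_integral_on_iff _ _ _ _ _) HI2 (eps / 3)) as [d2 [Hd2 P2]]; [lra|].
destruct (proj1 (RS_integral_on_iff _ _ _ _ _) HI (eps / 3)) as [d3 [Hd3 P3]]; [lra|].
destruct (exists_pos_le2 d1 d2 Hd1 Hd2) as [d12 [Hd12 [D1 D2]]].
destruct (exists_pos_le2 d12 d3 Hd12 Hd3) as [d [Hd [D12 D3]]].
destruct (uniform_partition_fine a b d Hab Hd) as [N1 HN1].
destruct (uniform_partition_fine b c d Hbc Hd) as [N2 HN2].
destruct (HN1 N1 (le_n _)) as [_ Q1]. destruct (HN2 N2 (le_n _)) as [_ Q2].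
pose proof (tagged_partition_app _ _ _ _ _ _ a b c d Q1 Q2) as Q.
specialize (P1 _ _ _ (tagged_partition_weaken _ _ _ _ _ d d1 ltac:(lra) Q1)).
specialize (P2 _ _ _ (tagged_partition_weaken _ _ _ _ _ d d2 ltac:(lra) Q2)).
specialize (P3 _ _ _ (tagged_partition_weaken _ _ _ _ _ _ _ D3 Q)).
rewrite rs_sum_app in P3 by (destruct Q1 as [_ [-> _]]; destruct Q2 as [-> _]; reflexivity).
apply Rabs_def2 in P1. apply Rabs_def2 in P2. apply Rabs_def2 in P3. apply Rabs_def1; lra.
Qed.

Definition rs_int_on (H g : R -> R) (a b : R) : R :=
  epsilon (inhabits 0) (RS_integral_on H g a b).

Lemma rs_int_on_spec H g a b : a <= b -> continuity H -> bounded_variation g ->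
  RS_integral_on H g a b (rs_int_on H g a b).
Proof.
intros Hab Hc Hbv. unfold rs_int_on. apply epsilon_spec, RS_integral_on_exists; auto.
Qed.

Section ImproperIntegral.
Variables (H g : R -> R) (K : R).
Hypotheses (Hc : continuity H) (HK : forall t, Rabs (H t) <= K) (Hbv : bounded_variation g).

Let K_nonneg : 0 <= K.
Proof. eapply Rle_trans; [apply Rabs_pos|apply (HK 0)]. Qed.

Lemma rs_int_on_small_pinf e : e > 0 -> exists M, forall b c, M <= b -> b <= c ->
  Rabs (rs_int_on H g b c) <= K * e.
Proof.
intros He. destruct (variation_tail_pinf g Hbv e He) as [M HM].
exists M. intros b c Hb Hbc. apply (le_of_le_plus_scaled_eps _ _ 1); [lra|]. intros eta Heta.
destruct (RS_integral_on_Rabs_approx H g b c _ K Hbc (rs_int_on_spec H g b c Hbc Hc Hbv)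
  (fun t _ => HK t) eta Heta) as [n [x [Hm [Hx0 [_ Hbound]]]]].
specialize (HM n x Hm ltac:(lra)). pose proof K_nonneg. nra.
Qed.

Lemma rs_int_on_small_minf e : e > 0 -> exists M, forall a b, a <= b -> b <= M ->
  Rabs (rs_int_on H g a b) <= K * e.
Proof.
intros He. destruct (variation_tail_minf g Hbv e He) as [M HM].
exists M. intros a b Hab Hb. apply (le_of_le_plus_scaled_eps _ _ 1); [lra|]. intros eta Heta.
destruct (RS_integral_on_Rabs_approx H g a b _ K Hab (rs_int_on_spec H g a b Hab Hc Hbv)
  (fun t _ => HK t) eta Heta) as [n [x [Hm [_ [Hxn Hbound]]]]].
specialize (HM n x Hm ltac:(lra)). pose proof K_nonneg. nra.
Qed.

Lemma rs_int_on_cauchy e : e > 0 -> exists M, 0 <= M /\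
  forall a a' b b', a <= - M -> a' <= - M -> M <= b -> M <= b' ->
  Rabs (rs_int_on H g a b - rs_int_on H g a' b') <= 4 * K * e.
Proof.
intros He. destruct (rs_int_on_small_pinf e He) as [Mp HMp].
destruct (rs_int_on_small_minf e He) as [Mn HMn].
set (M := Rmax (Rmax Mp (- Mn)) 0).
assert (HM : Mp <= M /\ - Mn <= M /\ 0 <= M).
{ unfold M. pose proof (Rmax_l (Rmax Mp (- Mn)) 0). pose proof (Rmax_r (Rmax Mp (- Mn)) 0).
  pose proof (Rmax_l Mp (- Mn)). pose proof (Rmax_r Mp (- Mn)). lra. }
exists M. split; [apply HM|].
assert (Henlarge : forall a b a0 b0, a0 <= a -> a <= - M -> M <= b -> b <= b0 ->
          Rabs (rs_int_on H g a b - rs_int_on H g a0 b0) <= 2 * K * e).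
{ intros a b a0 b0 H1 H2 H3 H4.
  assert (E1 := RS_integral_on_chasles H g a0 a b0 _ _ _ H1 ltac:(lra)
    (rs_int_on_spec H g a0 a H1 Hc Hbv) (rs_int_on_spec H g a b0 ltac:(lra) Hc Hbv)
    (rs_int_on_spec H g a0 b0 ltac:(lra) Hc Hbv)).
  assert (E2 := RS_integral_on_chasles H g a b b0 _ _ _ ltac:(lra) H4
    (rs_int_on_spec H g a b ltac:(lra) Hc Hbv) (rs_int_on_spec H g b b0 H4 Hc Hbv)
    (rs_int_on_spec H g a b0 ltac:(lra) Hc Hbv)).
  rewrite E1, E2. specialize (HMn a0 a H1 ltac:(lra)). specialize (HMp b b0 ltac:(lra) H4).
  replace (rs_int_on H g a b - (rs_int_on H g a0 a + (rs_int_on H g a b + rs_int_on H g b b0)))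
    with (- (rs_int_on H g a0 a + rs_int_on H g b b0)) by ring.
  rewrite Rabs_Ropp. eapply Rle_trans; [apply Rabs_triang|lra]. }
intros a a' b b' Ha Ha' Hb Hb'.
pose proof (Henlarge a b (Rmin a a') (Rmax b b') (Rmin_l _ _) Ha Hb (Rmax_l _ _)).
pose proof (Henlarge a' b' (Rmin a a') (Rmax b b') (Rmin_r _ _) Ha' Hb' (Rmax_r _ _)).
set (I0 := rs_int_on H g (Rmin a a') (Rmax b b')) in *.
replace (rs_int_on H g a b - rs_int_on H g a' b')
  with ((rs_int_on H g a b - I0) - (rs_int_on H g a' b' - I0)) by ring.
eapply Rle_trans; [unfold Rminus at 1; apply Rabs_triang|]. rewrite Rabs_Ropp. lra.
Qed.

Lemma RS_integral_R_exists : exists L, RS_integral_R H g L.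
Proof.
pose proof K_nonneg as HK0.
set (u := fun k => rs_int_on H g (- INR k) (INR k)).
assert (Hsmall : forall eps, eps > 0 -> exists M, 0 <= M /\
          forall a a' b b', a <= - M -> a' <= - M -> M <= b -> M <= b' ->
          Rabs (rs_int_on H g a b - rs_int_on H g a' b') < eps).
{ intros eps Heps. set (e := eps / 4 / (2 * (K + 1))).
  assert (He : e > 0) by (apply scaled_eps_pos; lra).
  assert (HKe := scaled_eps_mult_lt (eps / 4) K ltac:(lra) HK0). fold e in HKe.
  destruct (rs_int_on_cauchy e He) as [M [HM0 HM]]. exists M. split; [exact HM0|].
  intros a a' b b' Ha Ha' Hb Hb'. specialize (HM a a' b b' Ha Ha' Hb Hb'). lra. }
assert (Hcs : Cauchy_crit u).
{ intros eps Heps. destruct (Hsmall eps Heps) as [M [HM0 HM]].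
  destruct (INR_unbounded M) as [N HN]. exists N. intros p q Hp Hq. unfold Rdist, u.
  assert (INR N <= INR p) by (apply le_INR; lia). assert (INR N <= INR q) by (apply le_INR; lia).
  apply HM; lra. }
destruct (Rcomplete.R_complete u Hcs) as [L HL]. exists L.
intros eps Heps. destruct (Hsmall (eps / 2)) as [M [HM0 HM]]; [lra|].
exists M. intros a b Ha Hb. exists (rs_int_on H g a b).
split; [apply rs_int_on_spec; auto; lra|].
destruct (INR_unbounded M) as [N1 HN1]. destruct (HL (eps / 2)) as [N2 HN2]; [lra|].
specialize (HN2 (max N1 N2) ltac:(lia)). unfold Rdist, u in HN2.
assert (INR N1 <= INR (max N1 N2)) by (apply le_INR; lia).
specialize (HM a (- INR (max N1 N2)) b (INR (max N1 N2)) Ha ltac:(lra) Hb ltac:(lra)).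
set (Ik := rs_int_on H g (- INR (max N1 N2)) (INR (max N1 N2))) in *.
replace (rs_int_on H g a b - L) with ((rs_int_on H g a b - Ik) + (Ik - L)) by ring.
eapply Rle_lt_trans; [apply Rabs_triang|lra].
Qed.

End ImproperIntegral.

Lemma RS_int_R_spec H g K : continuity H -> (forall t, Rabs (H t) <= K) ->
  bounded_variation g -> RS_integral_R H g (RS_int_R H g).
Proof.
intros Hc HK Hbv. unfold RS_int_R. apply epsilon_spec.
apply (RS_integral_R_exists H g K); auto.
Qed.

Lemma RS_integral_R_approx H g L : RS_integral_R H g L -> forall eta, eta > 0 ->
  exists M, 0 <= M /\ forall a b, a <= - M -> M <= b ->
    exists I, RS_integral_on H g a b I /\ Rabs (I - L) < eta.
Proof.
intros HL eta Heta. destruct (HL eta Heta) as [M HM]. exists (Rmax M 0).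
split; [apply Rmax_r|]. intros a b Ha Hb. pose proof (Rmax_l M 0). apply HM; lra.
Qed.

Lemma mean_value_points f f' (x : nat -> R) N :
  (forall t, derivable_pt_lim f t (f' t)) -> (forall i, (i < N)%nat -> x i < x (S i)) ->
  exists c : nat -> R, forall i, (i < N)%nat ->
    x i < c i < x (S i) /\ f (x (S i)) - f (x i) = f' (c i) * (x (S i) - x i).
Proof.
intros Hf Hx.
apply (choice (fun i c => (i < N)%nat ->
  x i < c < x (S i) /\ f (x (S i)) - f (x i) = f' c * (x (S i) - x i))).
intros i. destruct (Nat.lt_ge_cases i N) as [Hi|Hi].
- destruct (mean_value f f' (x i) (x (S i)) Hf (Hx i Hi)) as [c Hc]. exists c; auto.
- exists 0. intros; lia.
Qed.

(* Summation by parts on one partition: with mean-value tags for [g' = h] and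
   [psi' = - k], the cell-wise error is
   [(x (S i) - x i) * (k (xi i) * (h (x (S i)) - h (eta i)) + h (eta i) * (k (xi i) - k (eta i)))]. *)
Lemma rs_sum_by_parts psi k g h x N a b d e Mk Mh :
  (forall t, derivable_pt_lim psi t (- k t)) -> (forall t, derivable_pt_lim g t (h t)) ->
  tagged_partition x x N a b d -> (forall i, (i < N)%nat -> x i < x (S i)) ->
  (forall u, a <= u <= b -> Rabs (k u) <= Mk) -> (forall u, a <= u <= b -> Rabs (h u) <= Mh) ->
  (forall u v, a <= u <= b -> a <= v <= b -> Rabs (u - v) < 2 * d -> Rabs (h u - h v) <= e) ->
  (forall u v, a <= u <= b -> a <= v <= b -> Rabs (u - v) < 2 * d -> Rabs (k u - k v) <= e) ->
  exists eta, tagged_partition x eta N a b d /\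
    Rabs (rs_sum psi h x x N - (psi b * h b - psi a * h a) - rs_sum k g x eta N)
      <= (Mk * e + Mh * e) * (b - a).
Proof.
intros Hpsi Hg Hx Hlt HMk HMh Uh Uk.
pose proof (tagged_partition_bounds _ _ _ _ _ _ Hx) as Bx.
destruct (mean_value_points g h x N Hg Hlt) as [eta Heta].
destruct (mean_value_points psi (fun t => - k t) x N Hpsi Hlt) as [xi Hxi].
destruct Hx as [Hx0 [HxN Hxd]].
exists eta. split.
{ split; [|split]; auto. intros i Hi. destruct (Heta i Hi) as [[E1 E2] _].
  destruct (Hxd i Hi). split; [lra|auto]. }
assert (Htel : psi b * h b - psi a * h a
               = fsum N (fun i => psi (x (S i)) * h (x (S i)) - psi (x i) * h (x i))).
{ rewrite (fsum_telescope N (fun i => psi (x i) * h (x i))), Hx0, HxN. reflexivity. }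
rewrite Htel. unfold rs_sum. rewrite <- !fsum_minus.
rewrite (fsum_ext N _ (fun i => (x (S i) - x i) *
  (k (xi i) * (h (x (S i)) - h (eta i)) + h (eta i) * (k (xi i) - k (eta i))))).
2:{ intros i Hi. destruct (Heta i Hi) as [_ E1]. destruct (Hxi i Hi) as [_ E2]. rewrite E1.
    replace (psi (x i) * (h (x (S i)) - h (x i)) - (psi (x (S i)) * h (x (S i)) - psi (x i) * h (x i)))
      with (- (psi (x (S i)) - psi (x i)) * h (x (S i))) by ring.
    rewrite E2. ring. }
replace (b - a) with (fsum N (fun i => x (S i) - x i)) by (rewrite fsum_telescope; lra).
rewrite <- fsum_scal. eapply Rle_trans; [apply Rabs_fsum_le|]. apply fsum_le. intros i Hi.
destruct (Heta i Hi) as [[E1 E2] _]. destruct (Hxi i Hi) as [[E3 E4] _].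
destruct (Hxd i Hi) as [_ E5].
pose proof (Bx i ltac:(lia)). pose proof (Bx (S i) ltac:(lia)).
rewrite Rabs_mult, (Rabs_right (x (S i) - x i)) by lra. rewrite Rmult_comm.
apply Rmult_le_compat_r; [lra|].
eapply Rle_trans; [apply Rabs_triang|]. rewrite !Rabs_mult.
apply Rplus_le_compat; apply Rmult_le_compat; try apply Rabs_pos.
- apply HMk; lra.
- apply Uh; try lra. apply Rabs_def1; lra.
- apply HMh; lra.
- apply Uk; try lra. apply Rabs_def1; lra.
Qed.

Lemma RS_integral_on_by_parts psi k g h a b I1 I2 : a < b ->
  (forall t, derivable_pt_lim psi t (- k t)) -> continuity k ->
  (forall t, derivable_pt_lim g t (h t)) -> continuity h ->
  RS_integral_on psi h a b I1 -> RS_integral_on k g a b I2 ->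
  I1 = psi b * h b - psi a * h a + I2.
Proof.
intros Hab Hpsi Hk Hg Hh HI1 HI2. apply Rminus_diag_uniq, eq_0_of_Rabs_lt_eps.
intros eps Heps.
destruct (continuity_bounded_on k a b ltac:(lra) (fun u _ => Hk u)) as [Mk HMk].
destruct (continuity_bounded_on h a b ltac:(lra) (fun u _ => Hh u)) as [Mh HMh].
assert (Mk0 : 0 <= Mk) by (eapply Rle_trans; [apply Rabs_pos|apply (HMk a)]; lra).
assert (Mh0 : 0 <= Mh) by (eapply Rle_trans; [apply Rabs_pos|apply (HMh a)]; lra).
set (C := (Mk + Mh) * (b - a)). assert (HC : 0 <= C) by (unfold C; nra).
set (e := eps / 3 / (2 * (C + 1))).
assert (He : e > 0) by (apply scaled_eps_pos; lra).
assert (HCe := scaled_eps_mult_lt (eps / 3) C ltac:(lra) HC). fold e in HCe.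
destruct (proj1 (RS_integral_on_iff _ _ _ _ _) HI1 (eps / 3)) as [d1 [Hd1 P1]]; [lra|].
destruct (proj1 (RS_integral_on_iff _ _ _ _ _) HI2 (eps / 3)) as [d2 [Hd2 P2]]; [lra|].
destruct (uniform_continuity_on h a b (fun u _ => Hh u) e He) as [d3 [Hd3 Uh]].
destruct (uniform_continuity_on k a b (fun u _ => Hk u) e He) as [d4 [Hd4 Uk]].
destruct (exists_pos_le2 d1 d2 Hd1 Hd2) as [d12 [Hd12 [D1 D2]]].
destruct (exists_pos_le2 d3 d4 Hd3 Hd4) as [d34 [Hd34 [D3 D4]]].
destruct (exists_pos_le2 d12 d34 Hd12 Hd34) as [d [Hd [D12 D34]]].
destruct (uniform_partition_fine a b d ltac:(lra) Hd) as [N HN].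
destruct (HN N (le_n N)) as [HN0 Hx]. set (x := uniform_partition a b N) in *.
assert (Hlt : forall i, (i < N)%nat -> x i < x (S i)).
{ intros i _. unfold x. rewrite uniform_partition_S by exact HN0.
  assert (0 < INR N) by (apply lt_0_INR; lia).
  assert (0 < (b - a) / INR N) by (apply Rdiv_lt_0_compat; lra). lra. }
destruct (rs_sum_by_parts psi k g h x N a b d e Mk Mh Hpsi Hg Hx Hlt HMk HMh
  (fun u v Hu Hv Huv => Uh u v Hu Hv ltac:(lra)) (fun u v Hu Hv Huv => Uk u v Hu Hv ltac:(lra)))
  as [eta [Heta Hsum]].
specialize (P1 N x x (tagged_partition_weaken _ _ _ _ _ d d1 ltac:(lra) Hx)).
specialize (P2 N x eta (tagged_partition_weaken _ _ _ _ _ d d2 ltac:(lra) Heta)).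
replace ((Mk * e + Mh * e) * (b - a)) with (C * e) in Hsum by (unfold C; ring).
replace (I1 - (psi b * h b - psi a * h a + I2)) with
  ((I1 - rs_sum psi h x x N) + (rs_sum psi h x x N - (psi b * h b - psi a * h a)
   - rs_sum k g x eta N) + (rs_sum k g x eta N - I2)) by ring.
eapply Rle_lt_trans; [apply Rabs_triang|].
eapply Rle_lt_trans; [apply Rplus_le_compat_r, Rabs_triang|].
rewrite Rabs_minus_sym in P1. lra.
Qed.

Lemma mean_value_increment G f u s : (forall t, derivable_pt_lim G t (f t)) ->
  exists c, Rabs (c - u) <= Rabs s /\ G (u + s) - G u = s * f c.
Proof.
intros HG. destruct (Rtotal_order s 0) as [Hs|[->|Hs]].
- destruct (mean_value G f (u + s) u HG ltac:(lra)) as [c [Hc E]]. exists c. split.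
  + rewrite Rabs_left, Rabs_left by lra. lra.
  + replace (G (u + s) - G u) with (- (G u - G (u + s))) by ring. rewrite E. ring.
- exists u. rewrite Rplus_0_r. split; [right; unfold Rminus; rewrite Rplus_opp_r|]; ring.
- destruct (mean_value G f u (u + s) HG ltac:(lra)) as [c [Hc E]]. exists c. split.
  + rewrite Rabs_right, Rabs_right by lra. lra.
  + rewrite E. ring.
Qed.

Lemma antiderivative_increment_near G f e d u s :
  (forall t, derivable_pt_lim G t (f t)) ->
  (forall u v, Rabs (u - v) < d -> Rabs (f u - f v) <= e) -> Rabs s < d ->
  Rabs (G (u + s) - G u - s * f u) <= Rabs s * e.
Proof.
intros HG Hunif Hs. destruct (mean_value_increment G f u s HG) as [c [Hc ->]].
replace (s * f c - s * f u) with (s * (f c - f u)) by ring. rewrite Rabs_mult.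
apply Rmult_le_compat_l; [apply Rabs_pos|]. apply Hunif. lra.
Qed.

Lemma antiderivative_increment_bound G f MF u s :
  (forall t, derivable_pt_lim G t (f t)) -> (forall u, Rabs (f u) <= MF) ->
  Rabs (G (u + s) - G u) <= Rabs s * MF.
Proof.
intros HG HMF. destruct (mean_value_increment G f u s HG) as [c [_ ->]].
rewrite Rabs_mult. apply Rmult_le_compat_l; [apply Rabs_pos|apply HMF].
Qed.

Section PrimitiveInBC.
Variable F : R -> R.
Hypothesis HF : B_C F.

Lemma B_C_lim_pinf : lim_pinf F (at_pinf F).
Proof.
destruct HF as [_ [_ [l Hl]]]. unfold at_pinf. apply epsilon_spec. exists l; exact Hl.
Qed.

Lemma B_C_bounded : exists MF, forall u, Rabs (F u) <= MF.
Proof.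
destruct HF as [Hc [Hminf _]].
destruct (Hminf 1) as [M1 HM1]; [lra|]. destruct (B_C_lim_pinf 1) as [M2 HM2]; [lra|].
destruct (continuity_bounded_on F (Rmin M1 M2) (Rmax M1 M2)) as [M HM].
{ pose proof (Rmin_l M1 M2); pose proof (Rmax_l M1 M2); lra. }
{ intros u _. apply Hc. }
exists (Rabs M + 1 + Rabs (at_pinf F)). intros u.
pose proof (Rabs_pos M). pose proof (Rabs_pos (at_pinf F)). pose proof (Rle_abs M).
destruct (Rle_dec u M1) as [Hu1|Hu1].
{ specialize (HM1 u Hu1). rewrite Rminus_0_r in HM1. lra. }
destruct (Rle_dec M2 u) as [Hu2|Hu2].
{ specialize (HM2 u (Rle_ge _ _ Hu2)).
  pose proof (Rabs_triang (F u - at_pinf F) (at_pinf F)) as Htri.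
  replace (F u - at_pinf F + at_pinf F) with (F u) in Htri by ring. lra. }
assert (Rabs (F u) <= M) by (apply HM; split; [apply Rle_trans with M1; [apply Rmin_l|lra]
                                              |apply Rle_trans with M2; [lra|apply Rmax_r]]).
lra.
Qed.

Lemma B_C_uniform_continuity : forall e, e > 0 -> exists d, d > 0 /\
  forall u v, Rabs (u - v) < d -> Rabs (F u - F v) <= e.
Proof.
destruct HF as [Hc [Hminf _]]. intros e He.
destruct (Hminf (e / 2)) as [M1 HM1]; [lra|]. destruct (B_C_lim_pinf (e / 2)) as [M2 HM2]; [lra|].
set (lo := Rmin M1 M2 - 1). set (hi := Rmax M1 M2 + 1).
assert (L1 : lo <= M1 - 1) by (unfold lo; pose proof (Rmin_l M1 M2); lra).
assert (L2 : M2 + 1 <= hi) by (unfold hi; pose proof (Rmax_r M1 M2); lra).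
destruct (Heine_cor2 (f := F) (a := lo) (b := hi) (fun x _ => Hc x) (mkposreal e He))
  as [[d0 Hd0] Hdd]. simpl in Hdd.
exists (Rmin d0 1). split; [apply Rmin_pos; lra|]. intros u v Huv.
pose proof (Rmin_l d0 1). pose proof (Rmin_r d0 1). apply Rabs_def2 in Huv as Huv'.
assert (Hleft : u <= M1 -> v <= M1 -> Rabs (F u - F v) <= e).
{ intros Hu Hv. specialize (HM1 u Hu) as A1. specialize (HM1 v Hv) as A2.
  rewrite Rminus_0_r in A1, A2.
  unfold Rminus. eapply Rle_trans; [apply Rabs_triang|]. rewrite Rabs_Ropp. lra. }
assert (Hright : u >= M2 -> v >= M2 -> Rabs (F u - F v) <= e).
{ intros Hu Hv. specialize (HM2 u Hu) as A1. specialize (HM2 v Hv) as A2.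
  replace (F u - F v) with ((F u - at_pinf F) - (F v - at_pinf F)) by ring.
  unfold Rminus at 1. eapply Rle_trans; [apply Rabs_triang|]. rewrite Rabs_Ropp. lra. }
destruct (Rlt_dec u lo); [apply Hleft; lra|].
destruct (Rlt_dec v lo); [apply Hleft; lra|].
destruct (Rlt_dec hi u); [apply Hright; lra|].
destruct (Rlt_dec hi v); [apply Hright; lra|].
left. apply Hdd; lra.
Qed.

End PrimitiveInBC.

Definition reflected_primitive (F : R -> R) (x : R) : R -> R :=
  fun y => at_pinf F - F (x - y).

Section Convolution.
Variable F : R -> R.
Hypothesis HF : B_C F.
Let A := at_pinf F.

Lemma reflected_primitive_continuity x : continuity (reflected_primitive F x).
Proof.
intros y. apply (continuity_pt_minus (fct_cte A) (fun y => F (x - y))).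
- apply continuity_pt_const. intros ? ?; reflexivity.
- apply continuity_pt_comp_reflect. destruct HF as [Hc _]. apply Hc.
Qed.

Lemma reflected_primitive_bounded : exists K, forall x t, Rabs (reflected_primitive F x t) <= K.
Proof.
destruct (B_C_bounded F HF) as [MF HMF]. exists (Rabs A + MF). intros x t.
unfold reflected_primitive. fold A. unfold Rminus at 1.
eapply Rle_trans; [apply Rabs_triang|]. rewrite Rabs_Ropp. specialize (HMF (x - t)). lra.
Qed.

Lemma at_pinf_reflected_primitive x : at_pinf (reflected_primitive F x) = A.
Proof.
apply at_pinf_eq. intros eps Heps. destruct HF as [_ [Hminf _]].
destruct (Hminf eps Heps) as [M HM]. exists (x - M). intros y Hy.
unfold reflected_primitive. fold A.
replace (A - F (x - y) - A) with (- (F (x - y) - 0)) by ring.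
rewrite Rabs_Ropp. apply HM. lra.
Qed.

Lemma conv_eq g x : conv F g x = A * at_pinf g - RS_int_R (reflected_primitive F x) g.
Proof.
unfold conv. cbv zeta. change (fun y => at_pinf F - F (x - y)) with (reflected_primitive F x).
rewrite at_pinf_reflected_primitive. reflexivity.
Qed.

Lemma RS_int_R_reflected_primitive g x : bounded_variation g ->
  RS_integral_R (reflected_primitive F x) g (RS_int_R (reflected_primitive F x) g).
Proof.
intros Hbv. destruct reflected_primitive_bounded as [K HK].
apply (RS_int_R_spec _ _ K); auto. apply reflected_primitive_continuity.
Qed.

Lemma conv_continuity g : bounded_variation g -> continuity (conv F g).
Proof.
intros Hbv x. apply continuity_pt_iff. intros eps Heps.
destruct (bounded_variation_bound g Hbv) as [V [HV0 HV]].
set (e := eps / (2 * (V + 1))). assert (He : e > 0) by apply (scaled_eps_pos eps V Heps HV0).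
assert (HVe := scaled_eps_mult_lt eps V Heps HV0). fold e in HVe.
destruct (B_C_uniform_continuity F HF e He) as [d [Hd Hdd]].
exists d. split; [exact Hd|]. intros x' Hx'. rewrite !conv_eq.
set (J' := RS_int_R (reflected_primitive F x') g). set (J := RS_int_R (reflected_primitive F x) g).
assert (HJ : Rabs (J' - J) <= e * V).
{ apply (le_of_le_plus_scaled_eps _ _ 2); [lra|]. intros eta Heta.
  destruct (RS_integral_R_approx _ _ _ (RS_int_R_reflected_primitive g x' Hbv) eta Heta)
    as [M1 [HM10 HM1]].
  destruct (RS_integral_R_approx _ _ _ (RS_int_R_reflected_primitive g x Hbv) eta Heta)
    as [M2 [HM20 HM2]].
  set (M := Rmax M1 M2). pose proof (Rmax_l M1 M2). pose proof (Rmax_r M1 M2).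
  destruct (HM1 (- M) M ltac:(unfold M; lra) ltac:(unfold M; lra)) as [I1 [R1 C1]].
  destruct (HM2 (- M) M ltac:(unfold M; lra) ltac:(unfold M; lra)) as [I2 [R2 C2]].
  assert (Rabs (I1 - I2) <= e * V).
  { apply (RS_integral_on_Rabs_minus_le (reflected_primitive F x') (reflected_primitive F x) g (- M) M I1 I2 e V); auto.
    - unfold M; lra.
    - intros t _. unfold reflected_primitive.
      replace (at_pinf F - F (x' - t) - (at_pinf F - F (x - t))) with (F (x - t) - F (x' - t)) by ring.
      apply Hdd. replace (x - t - (x' - t)) with (- (x' - x)) by ring. rewrite Rabs_Ropp; auto. }
  fold J' in C1. fold J in C2.
  replace (J' - J) with ((I1 - I2) - (I1 - J') + (I2 - J)) by ring.
  eapply Rle_trans; [apply Rabs_triang|].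
  eapply Rle_trans; [apply Rplus_le_compat_r; unfold Rminus at 1; apply Rabs_triang|].
  rewrite Rabs_Ropp. lra. }
replace (A * at_pinf g - J' - (A * at_pinf g - J)) with (- (J' - J)) by ring.
rewrite Rabs_Ropp. lra.
Qed.

(* On [[a, b]], the difference of the two [dg]-integrals is the [dg]-integral of
   [k t = F (x + s - t) - F (x - t)]; it integrates by parts against the primitive
   [psi t = G (x + s - t) - G (x - t) - s A] of [- k], and [psi] is within [|s| e]
   of [- s * reflected_primitive F x]. *)
Lemma conv_increment_on g h G x s e d Vh MF a b I0 I1 Ih :
  (forall t, derivable_pt_lim g t (h t)) -> continuity h ->
  (forall n y, mono_seq y n -> variation_sum h y n <= Vh) ->
  (forall u, derivable_pt_lim G u (F u)) -> (forall u, Rabs (F u) <= MF) ->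
  (forall u v, Rabs (u - v) < d -> Rabs (F u - F v) <= e) -> Rabs s < d -> a < b ->
  RS_integral_on (reflected_primitive F x) g a b I0 ->
  RS_integral_on (reflected_primitive F (x + s)) g a b I1 ->
  RS_integral_on (reflected_primitive F x) h a b Ih ->
  Rabs (I0 - I1 + s * Ih)
    <= Rabs s * e * Vh + Rabs s * (MF + Rabs A) * (Rabs (h a) + Rabs (h b)).
Proof.
intros Hd Hhc HVh HG HMF Hunif Hs Hab HI0 HI1 HIh.
set (k := fun t => F (x + s - t) - F (x - t)).
set (psi := fun t => G (x + s - t) - G (x - t) - s * A).
assert (Hk : RS_integral_on k g a b (I0 - I1)).
{ apply (RS_integral_on_ext (fun t => reflected_primitive F x t - reflected_primitive F (x + s) t)).
  - intros t. unfold k, reflected_primitive. ring.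
  - apply RS_integral_on_minus; auto. }
assert (Hpsi : forall t, derivable_pt_lim psi t (- k t)).
{ intros t. unfold psi, k.
  replace (- (F (x + s - t) - F (x - t))) with (- F (x + s - t) - - F (x - t) - 0) by ring.
  apply derivable_pt_lim_minus; [apply derivable_pt_lim_minus|apply derivable_pt_lim_const];
    apply derivable_pt_lim_reflect, HG. }
assert (Hkc : continuity k).
{ destruct HF as [Hc _]. intros t. unfold k.
  apply (continuity_pt_minus (fun t => F (x + s - t)) (fun t => F (x - t)));
    apply continuity_pt_comp_reflect, Hc. }
destruct (RS_integral_on_exists psi h a b ltac:(lra)
  (fun u _ => derivable_continuous_pt _ _ (exist _ _ (Hpsi u))) (ex_intro _ Vh HVh))
  as [Ipsi HIpsi].
assert (Hibp := RS_integral_on_by_parts psi k g h a b Ipsi (I0 - I1) Hab Hpsi Hkc Hd Hhc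
  HIpsi Hk).
assert (Hpsi_near : Rabs (Ipsi - - s * Ih) <= Rabs s * e * Vh).
{ apply (RS_integral_on_Rabs_minus_le psi (fun t => - s * reflected_primitive F x t) h a b);
    auto; [lra|apply RS_integral_on_scal; auto|].
  intros t _. unfold psi, reflected_primitive. fold A.
  replace (x + s - t) with (x - t + s) by ring.
  replace (G (x - t + s) - G (x - t) - s * A - - s * (A - F (x - t)))
    with (G (x - t + s) - G (x - t) - s * F (x - t)) by ring.
  apply (antiderivative_increment_near G F e d); auto. }
assert (Hpsi_bound : forall t, Rabs (psi t) <= Rabs s * (MF + Rabs A)).
{ intros t. unfold psi. replace (x + s - t) with (x - t + s) by ring.
  unfold Rminus at 1. eapply Rle_trans; [apply Rabs_triang|].
  rewrite Rabs_Ropp, Rabs_mult.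
  pose proof (antiderivative_increment_bound G F MF (x - t) s HG HMF). lra. }
replace (I0 - I1 + s * Ih)
  with ((Ipsi - - s * Ih) - (psi b * h b - psi a * h a)) by (rewrite Hibp; ring).
unfold Rminus at 1. eapply Rle_trans; [apply Rabs_triang|]. rewrite Rabs_Ropp.
apply Rplus_le_compat; [exact Hpsi_near|].
unfold Rminus. eapply Rle_trans; [apply Rabs_triang|]. rewrite Rabs_Ropp, !Rabs_mult.
pose proof (Hpsi_bound a). pose proof (Hpsi_bound b).
pose proof (Rabs_pos (h a)). pose proof (Rabs_pos (h b)). nra.
Qed.

Lemma conv_increment_bound g h G x s e d Vh MF :
  bounded_variation g -> bounded_variation h ->
  (forall t, derivable_pt_lim g t (h t)) -> continuity h ->
  (forall n y, mono_seq y n -> variation_sum h y n <= Vh) ->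
  (forall u, derivable_pt_lim G u (F u)) -> (forall u, Rabs (F u) <= MF) ->
  (forall u v, Rabs (u - v) < d -> Rabs (F u - F v) <= e) -> Rabs s < d ->
  Rabs (RS_int_R (reflected_primitive F x) g - RS_int_R (reflected_primitive F (x + s)) g
        + s * RS_int_R (reflected_primitive F x) h) <= Rabs s * e * Vh.
Proof.
intros Hg Hh Hd Hhc HVh HG HMF Hunif Hs.
set (Jgs := RS_int_R (reflected_primitive F (x + s)) g).
set (Jgx := RS_int_R (reflected_primitive F x) g).
set (Jhx := RS_int_R (reflected_primitive F x) h).
assert (HMF0 : 0 <= MF) by (eapply Rle_trans; [apply Rabs_pos|apply (HMF 0)]).
pose proof (Rabs_pos s) as Hs0. pose proof (Rabs_pos A) as HA0.
apply (le_of_le_plus_scaled_eps _ _ (2 + 2 * Rabs s * (MF + Rabs A) + Rabs s)); [nra|].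
intros eta Heta.
destruct (RS_integral_R_approx _ _ _ (RS_int_R_reflected_primitive g (x + s) Hg) eta Heta)
  as [M1 [HM10 HM1]].
destruct (RS_integral_R_approx _ _ _ (RS_int_R_reflected_primitive g x Hg) eta Heta)
  as [M2 [HM20 HM2]].
destruct (RS_integral_R_approx _ _ _ (RS_int_R_reflected_primitive h x Hh) eta Heta)
  as [M3 [HM30 HM3]].
destruct (derivative_vanishes_at_infinity g h Hg Hh Hd eta Heta) as [Mt [HMt0 HMt]].
set (M := M1 + M2 + M3 + Mt + 1).
destruct (HM1 (- M) M ltac:(unfold M; lra) ltac:(unfold M; lra)) as [I1 [HI1 C1]].
destruct (HM2 (- M) M ltac:(unfold M; lra) ltac:(unfold M; lra)) as [I0 [HI0 C0]].
destruct (HM3 (- M) M ltac:(unfold M; lra) ltac:(unfold M; lra)) as [Ih [HIh Ch]].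
fold Jgs in C1. fold Jgx in C0. fold Jhx in Ch.
assert (Hinc := conv_increment_on g h G x s e d Vh MF (- M) M I0 I1 Ih Hd Hhc HVh HG HMF
  Hunif Hs ltac:(unfold M; lra) HI0 HI1 HIh).
assert (Rabs (h M) < eta) by (apply HMt; rewrite Rabs_right; unfold M; lra).
assert (Rabs (h (- M)) < eta) by (apply HMt; rewrite Rabs_Ropp, Rabs_right; unfold M; lra).
assert (Rabs s * (MF + Rabs A) * (Rabs (h (- M)) + Rabs (h M))
        <= Rabs s * (MF + Rabs A) * (2 * eta)) by (apply Rmult_le_compat_l; nra).
assert (Rabs (s * (Jhx - Ih)) <= Rabs s * eta).
{ rewrite Rabs_mult, Rabs_minus_sym. apply Rmult_le_compat_l; lra. }
replace (Jgx - Jgs + s * Jhx)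
  with ((I0 - I1 + s * Ih) - (I0 - Jgx) + (I1 - Jgs) + s * (Jhx - Ih)) by ring.
eapply Rle_trans; [apply Rabs_triang|].
eapply Rle_trans; [apply Rplus_le_compat_r, Rabs_triang|].
eapply Rle_trans;
  [apply Rplus_le_compat_r, Rplus_le_compat_r; unfold Rminus at 1; apply Rabs_triang|].
rewrite Rabs_Ropp. lra.
Qed.

Lemma conv_derivable g h : bounded_variation g -> bounded_variation h -> continuity h ->
  (forall t, derivable_pt_lim g t (h t)) ->
  forall x, derivable_pt_lim (conv F g) x (conv F h x).
Proof.
intros Hg Hh Hhc Hd x.
assert (Hh0 : at_pinf h = 0).
{ apply at_pinf_eq. intros eps Heps.
  destruct (derivative_vanishes_at_infinity g h Hg Hh Hd eps Heps) as [M [HM0 HM]].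
  exists M. intros y Hy. rewrite Rminus_0_r. apply HM. rewrite Rabs_right; lra. }
destruct (bounded_variation_bound h Hh) as [Vh [HVh0 HVh]].
destruct (B_C_bounded F HF) as [MF HMF].
destruct (continuity_antiderivative F (proj1 HF)) as [G HG].
intros eps Heps.
set (e := eps / (2 * (Vh + 1))).
assert (He : e > 0) by apply (scaled_eps_pos eps Vh Heps HVh0).
assert (HVe := scaled_eps_mult_lt eps Vh Heps HVh0). fold e in HVe.
destruct (B_C_uniform_continuity F HF e He) as [d [Hd0 Hunif]].
exists (mkposreal d Hd0). simpl. intros s Hs0 Hs.
assert (Hkey := conv_increment_bound g h G x s e d Vh MF Hg Hh Hd Hhc HVh HG HMF Hunif Hs).
rewrite !conv_eq, Hh0.
set (Jgs := RS_int_R (reflected_primitive F (x + s)) g) in *.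
set (Jgx := RS_int_R (reflected_primitive F x) g) in *.
set (Jhx := RS_int_R (reflected_primitive F x) h) in *.
replace ((A * at_pinf g - Jgs - (A * at_pinf g - Jgx)) / s - (A * 0 - Jhx))
  with ((Jgx - Jgs + s * Jhx) / s) by (field; auto).
unfold Rdiv. rewrite Rabs_mult, Rabs_inv.
assert (Hsp : 0 < Rabs s) by (apply Rabs_pos_lt; auto).
apply Rmult_lt_reg_r with (Rabs s); [exact Hsp|]. rewrite Rmult_assoc, Rinv_l by lra.
nra.
Qed.

End Convolution.

Lemma AC_bar_continuity h : AC_bar h -> continuity h.
Proof.
intros [Hac _] t. apply continuity_pt_iff. intros eps Heps.
destruct (Hac (t - 1) (t + 1) ltac:(lra) eps Heps) as [d [Hd Hdd]].
exists (Rmin d 1). split; [apply Rmin_pos; lra|]. intros y Hy.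
pose proof (Rmin_l d 1). pose proof (Rmin_r d 1). apply Rabs_def2 in Hy.
specialize (Hdd 1%nat (fun j => match j with O => Rmin t y | _ => Rmax t y end)).
simpl in Hdd. unfold Rmin, Rmax in Hdd. destruct (Rle_dec t y).
- assert (0 + Rabs (h y - h t) < eps) by
    (apply Hdd; [lra|lra|intros j Hj; destruct j; simpl; lra|lra]). lra.
- assert (0 + Rabs (h t - h y) < eps) by
    (apply Hdd; [lra|lra|intros j Hj; destruct j; simpl; lra|lra]).
  rewrite Rabs_minus_sym. lra.
Qed.

Theorem theorem4 (F : R -> R) (n : nat) (g : R -> R) (dg : nat -> R -> R) :
  B_C F ->
  dg O = g ->
  (forall k x, (k < n)%nat -> derivable_pt_lim (dg k) x (dg (S k) x)) ->
  (forall k, (k <= n)%nat -> AC_bar (dg k)) ->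
  exists c : nat -> R -> R,
    c O = conv F g /\
    (forall k x, (k < n)%nat -> derivable_pt_lim (c k) x (c (S k) x)) /\
    (forall k, (k <= n)%nat -> continuity (c k)) /\
    (forall x, c n x = conv F (dg n) x).
Proof.
intros HF Hdg0 Hder Hac.
exists (fun k => conv F (dg k)). split; [|split; [|split]].
- rewrite Hdg0. reflexivity.
- intros k x Hk.
  apply (conv_derivable F HF (dg k) (dg (S k))); try (apply Hac; lia).
  + apply AC_bar_continuity, Hac. lia.
  + intros t. apply Hder, Hk.
- intros k Hk. apply conv_continuity; auto. apply (Hac k), Hk.
- reflexivity.
Qed.
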